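(* Let $R$ be a $*$-ring. If ${\rm psr}(R)=1$, then $R$ is $*$-clean.
   Context: A $*$-ring is a ring with identity with an involution $*$. A projection is $p$ with $p^2=p=p^*$. $R$ is $*$-clean if every element is the sum of a projection and a unit. ${\rm psr}(R)=1$ means: for any $a,b\in R$ with $aR+bR=R$ there is a projection $p$ such that $a+bp$ is a unit. *)

From mathcomp Require Import all_boot all_algebra.
Set Implicit Arguments. Unset Strict Implicit. Unset Printing Implicit Defensive.
Import GRing.Theory.
Local Open Scope ring_scope.

Definition involution (R : unitRingType) (star : R -> R) : Prop :=
  [/\ forall x y, star (x + y) = star x + star y,
      forall x y, star (x * y) = star y * star x
    & forall x, star (star x) = x].

Definition projection (R : unitRingType) (star : R -> R) (p : R) : Prop :=
  p * p = p /\ star p = p.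

Definition star_clean (R : unitRingType) (star : R -> R) : Prop :=
  forall a : R, exists p u : R, projection star p /\ u \is a GRing.unit /\ a = p + u.

Definition psr_one (R : unitRingType) (star : R -> R) : Prop :=
  forall a b : R, (exists x y : R, a * x + b * y = 1) ->
    exists p : R, projection star p /\ (a + b * p) \is a GRing.unit.

From mathcomp Require Import all_boot all_algebra.
Set Implicit Arguments. Unset Strict Implicit. Unset Printing Implicit Defensive.
Import GRing.Theory.
Local Open Scope ring_scope.

(* The pair (-a, 1) is unimodular, so psr(R) = 1 yields p with -a + p a unit. *)
Lemma psr_one_sub_unit (R : unitRingType) (star : R -> R) (a : R) :
  psr_one star -> exists2 p, projection star p & p - a \is a GRing.unit.
Proof.
move=> psr1; have [|p [proj_p unit_p]] := psr1 (- a) 1.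
  by exists 0, 1; rewrite mulr0 add0r mulr1.
by exists p => //; rewrite addrC -[p]mul1r.
Qed.

Theorem proposition4p4 (R : unitRingType) (star : R -> R) :
  involution star -> psr_one star -> star_clean star.
Proof.
move=> _ psr1 a; have [p proj_p unit_pa] := psr_one_sub_unit a psr1.
exists p, (a - p); split=> //; split; last by rewrite addrC subrK.
by rewrite -opprB unitrN.
Qed.
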